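(* Let $G,H$ be connected graphs, $u_0\in V(G)$, $v_0\in V(H)$. If $\iota(G),\iota(H)<\infty$ then $\iota(G\circ_{u_0,v_0}H)=\iota(G)+\iota(H)$. If $\iota(G)=\infty$ or $\iota(H)=\infty$, then $\iota(G\circ_{u_0,v_0}H)=\infty$.
   Context: For a connected graph $G$ on vertices $v_1,\dots,v_n$, its distance matrix is $D=(d(v_i,v_j))_{i,j=1}^n$, where $d$ is the shortest-path distance; $\vec 1$ denotes the all-ones vector. $G$ is distance exceptional if $D\vec x=\vec 1$ has no solution. A curvature potential is a vector $\vec x$ with $D\vec x=\vec 1$. Curvature index $\iota(G)\in\mathbb{R}\cup\{\infty\}$: if $G$ is distance exceptional or has a curvature potential $\vec x$ with $\vec 1^\top\vec x\neq0$, then $\iota(G)$ is the unique real number with $\{D\vec x:\vec 1^\top\vec x=1\}\cap\mathbb{R}\vec 1=\{\iota(G)\vec 1\}$ (this intersection is a single point); otherwise (curvature potentials exist and all have $\vec 1^\top\vec x=0$) $\iota(G)=\infty$. The vertex coalescence $G\circ_{u_0,v_0}H$ is the graph obtained from the disjoint union of $G$ and $H$ by identifying $u_0$ with $v_0$. *)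

From HB Require Import structures.
From mathcomp Require Import all_boot all_order all_algebra.
Set Implicit Arguments. Unset Strict Implicit. Unset Printing Implicit Defensive.
Import Order.TTheory GRing.Theory Num.Theory.
Local Open Scope ring_scope.

Definition simple_graph (T : finType) (e : rel T) : Prop :=
  symmetric e /\ irreflexive e.

Definition connected_graph (T : finType) (e : rel T) : Prop :=
  forall x y : T, connect e x y.

Fixpoint reach (T : finType) (e : rel T) (n : nat) (x y : T) : bool :=
  match n with
  | 0 => x == y
  | n'.+1 => [exists z, e x z && reach e n' z y]
  end.

(* Shortest-path distance: least n (< #|T|) with a walk of length n.
   For a connected graph this is the usual distance. *)
Definition gdist (T : finType) (e : rel T) (x y : T) : nat :=
  find (fun n => reach e n x y) (iota 0 #|T|).

Definition Dmul (R : realFieldType) (T : finType) (e : rel T) (x : T -> R) : T -> R :=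
  fun v => \sum_(u : T) (gdist e v u)%:R * x u.

Definition curvature_potential (R : realFieldType) (T : finType) (e : rel T)
  (x : T -> R) : Prop := forall v, Dmul e x v = 1.

Definition distance_exceptional (R : realFieldType) (T : finType) (e : rel T) : Prop :=
  ~ exists x : T -> R, curvature_potential e x.

(* curvature_index e i : the curvature index of the graph is i,
   where None stands for infinity. *)
Definition curvature_index (R : realFieldType) (T : finType) (e : rel T)
  (i : option R) : Prop :=
  match i with
  | Some t =>
      (distance_exceptional R e \/
        exists x : T -> R, curvature_potential e x /\ \sum_(v : T) x v != 0)
      /\ (forall s : R,
            (exists x : T -> R, \sum_(v : T) x v = 1 /\ forall v, Dmul e x v = s)
            <-> s = t)
  | None =>
      (exists x : T -> R, curvature_potential e x)
      /\ forall x : T -> R, curvature_potential e x -> \sum_(v : T) x v = 0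
  end.

(* Vertex coalescence G o_{u0,v0} H: vertex set V(G) + (V(H) \ {v0}),
   where v0 is identified with u0. *)
Definition coal_vertex (T1 T2 : finType) (v0 : T2) : finType :=
  (T1 + {v : T2 | v != v0})%type.

Definition coal_rel (T1 T2 : finType) (e1 : rel T1) (e2 : rel T2) (u0 : T1) (v0 : T2)
  : rel (@coal_vertex T1 T2 v0) :=
  fun a b =>
    match a, b with
    | inl x, inl y => e1 x y
    | inr x, inr y => e2 (val x) (val y)
    | inl x, inr y => (x == u0) && e2 v0 (val y)
    | inr x, inl y => (y == u0) && e2 (val x) v0
    end.
Arguments coal_vertex : clear implicits.
Arguments coal_rel {T1 T2} e1 e2 u0 v0.

From HB Require Import structures.
From mathcomp Require Import all_boot all_order all_algebra.
From mathcomp Require Import ring.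
From Stdlib Require Import Classical.
Import Order.TTheory GRing.Theory Num.Theory.
Set Implicit Arguments. Unset Strict Implicit.
Local Open Scope ring_scope.

(* In the coalescence every vertex is a pair (g, h) of a vertex of G and a
   vertex of H with g = u0 or h = v0, and the distance is the l1-distance
   d_G(g, g') + d_H(h, h').  Hence if x and y are normalised vectors with
   D_G x = a 1 and D_H y = b 1, then x - delta_u0 pushed into the copy of G
   plus y pushed into the copy of H is normalised with D z = (a + b) 1; a
   curvature potential of total weight zero pushes forward in the same way.
   By the symmetry of D, a curvature potential w and a normalised x with
   D x = s 1 satisfy s (1^T w) = 1, so a single normalised x with D x
   constant already determines the index. *)

Section Walks.
Variables (T : finType) (e : rel T).
Local Open Scope nat_scope.

Lemma reach_cat n m x y z :
  reach e n x y -> reach e m y z -> reach e (n + m) x z.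
Proof.
elim: n x => [|n IH] x /=; first by move/eqP->.
case/existsP=> w /andP[exw rw] ry /=.
by apply/existsP; exists w; rewrite exw (IH _ rw ry).
Qed.

Lemma reach_edge x y : e x y -> reach e 1 x y.
Proof. by move=> exy /=; apply/existsP; exists y; rewrite exy eqxx. Qed.

Lemma reach_sym : symmetric e -> forall n x y, reach e n x y = reach e n y x.
Proof.
move=> esym; suff reachS n x y : reach e n x y -> reach e n y x.
  by move=> n x y; apply/idP/idP; apply: reachS.
elim: n x y => [|n IH] x y; first by rewrite /= eq_sym.
move=> /= /existsP[z /andP[exz rzy]].
have := reach_cat (IH _ _ rzy) (reach_edge (_ : e z x)).
by rewrite addn1; apply; rewrite esym.
Qed.

Lemma path_reach x p : path e x p -> reach e (size p) x (last x p).
Proof.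
elim: p x => [|z p IH] x /=; first by rewrite eqxx.
by case/andP=> exz pz; apply/existsP; exists z; rewrite exz IH.
Qed.

Lemma reach_connect n x y : reach e n x y -> connect e x y.
Proof.
elim: n x => [|n IH] x /=; first by move/eqP->.
by case/existsP=> z /andP[exz /IH]; apply: connect_trans (connect1 exz).
Qed.

Lemma gdist_le n x y : reach e n x y -> gdist e x y <= n.
Proof.
move=> rxy; rewrite /gdist; case: leqP => // lt_n_find.
have lt_n_T : n < #|T|.
  by rewrite -(size_iota 0 #|T|); apply: leq_trans lt_n_find (find_size _ _).
by have := before_find 0 lt_n_find; rewrite nth_iota // add0n rxy.
Qed.

Lemma gdist_edge x y : e x y -> gdist e x y <= 1.
Proof. by move/reach_edge/gdist_le. Qed.

Lemma gdist_xx x : gdist e x x = 0.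
Proof. by apply/eqP; rewrite -leqn0; apply: (@gdist_le 0); rewrite /= eqxx. Qed.

Lemma gdist_sym : symmetric e -> forall x y, gdist e x y = gdist e y x.
Proof. by move=> esym x y; apply: eq_find => n; rewrite reach_sym. Qed.

(* A shortest walk is a path without repeated vertices, hence has fewer than
   #|T| steps and is found by the search in [gdist]. *)
Lemma reach_gdist x y : connect e x y -> reach e (gdist e x y) x y.
Proof.
case/connectP=> p pxp ->; case: (shortenP pxp) => q pxq uq _.
have lt_q_T : size q < #|T|.
  by have := max_card (mem (x :: q)); rewrite (card_uniqP uq).
have has_q : has (fun n => reach e n x (last x q)) (iota 0 #|T|).
  by apply/hasP; exists (size q); rewrite ?mem_iota ?path_reach.
have := nth_find 0 has_q; rewrite nth_iota ?add0n //.
by rewrite -[X in _ < X](size_iota 0 #|T|) -has_find.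
Qed.

Lemma gdist_triangle x y z : connected_graph e ->
  gdist e x z <= gdist e x y + gdist e y z.
Proof. by move=> conn; apply/gdist_le/reach_cat; apply/reach_gdist/conn. Qed.

End Walks.

Lemma reach_hom (T T' : finType) (e : rel T) (e' : rel T') (f : T -> T') :
  (forall u v, e u v -> e' (f u) (f v)) ->
  forall n x y, reach e n x y -> reach e' n (f x) (f y).
Proof.
move=> fe; elim=> [|n IH] x y /=; first by move/eqP->.
case/existsP=> z /andP[exz rzy]; apply/existsP; exists (f z).
by rewrite fe // IH.
Qed.

Section WeightedSums.
Variables (R : pzSemiRingType) (A : finType).

Definition pushforward (B : finType) (f : A -> B) (x : A -> R) (b : B) : R :=
  \sum_(a | f a == b) x a.

Definition dirac (a0 a : A) : R := (a == a0)%:R.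

Lemma sum_mul_pushforward (B : finType) (f : A -> B) (x : A -> R) (F : B -> R) :
  \sum_b F b * pushforward f x b = \sum_a F (f a) * x a.
Proof.
rewrite [RHS](partition_big f xpredT) //; apply: eq_bigr => b _.
by rewrite mulr_sumr; apply: eq_bigr => a /eqP <-.
Qed.

Lemma sum_pushforward (B : finType) (f : A -> B) (x : A -> R) :
  \sum_b pushforward f x b = \sum_a x a.
Proof. by rewrite [RHS](partition_big f xpredT). Qed.

Lemma sum_mul_dirac (F : A -> R) a0 : \sum_a F a * dirac a0 a = F a0.
Proof.
rewrite (bigD1 a0) //= /dirac eqxx mulr1 big1 ?addr0 // => a /negbTE ->.
by rewrite mulr0.
Qed.

Lemma sum_dirac a0 : \sum_a dirac a0 a = 1.
Proof.
by rewrite -(sum_mul_dirac (fun _ => 1) a0); apply: eq_bigr => a _; rewrite mul1r.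
Qed.

End WeightedSums.

Section DistanceMatrix.
Variables (R : realFieldType) (T : finType) (e : rel T).

Lemma Dmul_add (f g : T -> R) v :
  Dmul e (fun u => f u + g u) v = Dmul e f v + Dmul e g v.
Proof. by rewrite /Dmul -big_split; apply: eq_bigr => u _; rewrite mulrDr. Qed.

Lemma Dmul_sub (f g : T -> R) v :
  Dmul e (fun u => f u - g u) v = Dmul e f v - Dmul e g v.
Proof. by rewrite /Dmul -sumrB; apply: eq_bigr => u _; rewrite mulrBr. Qed.

Lemma Dmul_scale (a : R) (f : T -> R) v :
  Dmul e (fun u => a * f u) v = a * Dmul e f v.
Proof. by rewrite /Dmul mulr_sumr; apply: eq_bigr => u _; rewrite mulrCA. Qed.

Lemma sum_mul_Dmul_const (p q : T -> R) c : (forall v, Dmul e q v = c) ->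
  \sum_v p v * Dmul e q v = c * \sum_v p v.
Proof. by move=> Dq; rewrite mulr_sumr; apply: eq_bigr => v _; rewrite Dq mulrC. Qed.

Lemma Dmul_pushforward (A : finType) (f : A -> T) (x : A -> R) v :
  Dmul e (pushforward f x) v = \sum_a (gdist e v (f a))%:R * x a.
Proof. exact: sum_mul_pushforward. Qed.

Lemma Dmul_dirac u0 v : Dmul e (dirac R u0) v = (gdist e v u0)%:R.
Proof. exact: sum_mul_dirac. Qed.

Hypothesis e_sym : symmetric e.

Lemma sum_mul_DmulC (p q : T -> R) :
  \sum_v p v * Dmul e q v = \sum_v q v * Dmul e p v.
Proof.
rewrite /Dmul; under eq_bigr do rewrite mulr_sumr.
rewrite exchange_big; apply: eq_bigr => u _; rewrite mulr_sumr.
by apply: eq_bigr => v _; rewrite (gdist_sym e_sym v u); ring.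
Qed.

Lemma curvature_potential_sum (w x : T -> R) s :
  curvature_potential e w -> \sum_v x v = 1 -> (forall v, Dmul e x v = s) ->
  s * \sum_v w v = 1.
Proof.
move=> Dw sum_x Dx; rewrite -(sum_mul_Dmul_const w Dx) sum_mul_DmulC.
by rewrite (sum_mul_Dmul_const x Dw) sum_x mulr1.
Qed.

Lemma curvature_index_Some (z : T -> R) t :
  \sum_v z v = 1 -> (forall v, Dmul e z v = t) -> curvature_index e (Some t).
Proof.
move=> sum_z Dz; split.
  have [[w Dw]|] := classic (exists w : T -> R, curvature_potential e w).
    2: by left.
  right; exists w; split => //; apply/eqP => sum_w0.
  have := curvature_potential_sum Dw sum_z Dz.
  by rewrite sum_w0 mulr0 => /esym/eqP; rewrite oner_eq0.
move=> s; split=> [[x [sum_x Dx]]|->]; last by exists z.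
case: (eqVneq s t) => // s_neq_t; exfalso.
pose w u := (s - t)^-1 * (x u - z u).
have Dw : curvature_potential e w.
  by move=> v; rewrite Dmul_scale Dmul_sub Dx Dz mulVf // subr_eq0.
have := curvature_potential_sum Dw sum_z Dz.
by rewrite -mulr_sumr sumrB sum_x sum_z subrr !mulr0 => /esym/eqP; rewrite oner_eq0.
Qed.

Lemma curvature_index_None (w : T -> R) :
  curvature_potential e w -> \sum_v w v = 0 -> curvature_index e (@None R).
Proof.
move=> Dw sum_w0; split=> [|x Dx]; first by exists w.
have := sum_mul_DmulC x w.
by rewrite (sum_mul_Dmul_const x Dw) (sum_mul_Dmul_const w Dx) !mul1r sum_w0.
Qed.

End DistanceMatrix.

Section Coalescence.
Variables (T1 T2 : finType) (e1 : rel T1) (e2 : rel T2) (u0 : T1) (v0 : T2).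
Local Notation K := (coal_vertex T1 T2 v0).
Local Notation eK := (coal_rel e1 e2 u0 v0).

Definition coal_embH (h : T2) : K :=
  if insub h is Some hs then inr hs else inl u0.
Definition coal_projG (c : K) : T1 := if c is inl x then x else u0.
Definition coal_projH (c : K) : T2 := if c is inr hs then val hs else v0.

Lemma coal_embH_val (hs : {h | h != v0}) : coal_embH (val hs) = inr hs.
Proof. by rewrite /coal_embH valK. Qed.

Lemma coal_embH_v0 : coal_embH v0 = inl u0.
Proof. by rewrite /coal_embH insubF ?eqxx. Qed.

Lemma coal_projG_embH h : coal_projG (coal_embH h) = u0.
Proof. by rewrite /coal_embH; case: insubP. Qed.

Lemma coal_projH_embH h : coal_projH (coal_embH h) = h.
Proof. by rewrite /coal_embH; case: insubP => [hs _ <- | /negbNE/eqP ->]. Qed.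

Lemma coal_vertex_ind (P : K -> Prop) :
  (forall x, P (inl x)) -> (forall h, P (coal_embH h)) -> forall c, P c.
Proof. by move=> Pinl PembH [x | hs]; rewrite -?coal_embH_val. Qed.

Hypotheses (e1_sym : symmetric e1) (e2_sym : symmetric e2).
Hypothesis e2_irr : irreflexive e2.
Hypotheses (conn1 : connected_graph e1) (conn2 : connected_graph e2).

Lemma coal_rel_sym : symmetric eK.
Proof.
by case=> [x | hs] [y | ks]; rewrite /coal_rel; [exact: e1_sym | rewrite e2_sym..].
Qed.

Lemma coal_rel_embH h k : e2 h k -> eK (coal_embH h) (coal_embH k).
Proof.
rewrite /coal_embH; case: insubP => [hs _ <- | /negbNE/eqP ->];
  case: insubP => [ks _ <- | /negbNE/eqP ->] //=; rewrite ?eqxx //.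
by rewrite e2_irr.
Qed.

Local Notation coal_dist c c' :=
  (gdist e1 (coal_projG c) (coal_projG c') + gdist e2 (coal_projH c) (coal_projH c'))%N.

Lemma coal_dist_edge c c' : eK c c' -> (coal_dist c c' <= 1)%N.
Proof.
case: c c' => [x | hs] [y | ks]; rewrite /coal_rel /=.
- by move/gdist_edge; rewrite gdist_xx addn0.
- by case/andP=> /eqP-> /gdist_edge; rewrite gdist_xx.
- by case/andP=> /eqP-> /gdist_edge; rewrite gdist_xx.
- by move/gdist_edge; rewrite gdist_xx.
Qed.

Lemma coal_dist_le_walk n c c' : reach eK n c c' -> (coal_dist c c' <= n)%N.
Proof.
elim: n c => [|n IH] c /=; first by move/eqP->; rewrite !gdist_xx.
case/existsP=> c1 /andP[/coal_dist_edge edge /IH walk].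
have := leq_add edge walk; rewrite add1n; apply: leq_trans.
by rewrite addnACA leq_add ?gdist_triangle.
Qed.

Lemma coal_walk c c' : reach eK (coal_dist c c') c c'.
Proof.
have inl_walk x y : reach eK (gdist e1 x y) (inl x) (inl y).
  exact: reach_hom (reach_gdist (conn1 x y)).
have embH_walk h k : reach eK (gdist e2 h k) (coal_embH h) (coal_embH k).
  exact: reach_hom coal_rel_embH _ _ _ (reach_gdist (conn2 h k)).
elim/coal_vertex_ind: c => [x | h]; elim/coal_vertex_ind: c' => [y | k];
  rewrite /= ?coal_projG_embH ?coal_projH_embH ?gdist_xx ?addn0 ?add0n //.
- by apply: reach_cat (inl_walk _ _) _; rewrite -coal_embH_v0; apply: embH_walk.
- rewrite addnC; apply: reach_cat (embH_walk _ _) _.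
  by rewrite coal_embH_v0; apply: inl_walk.
Qed.

Lemma gdist_coal c c' : gdist eK c c' = coal_dist c c'.
Proof.
apply/anti_leq; rewrite gdist_le ?coal_walk //=.
exact/coal_dist_le_walk/reach_gdist/reach_connect/coal_walk.
Qed.

Variable R : realFieldType.

Lemma Dmul_coal_inl (x : T1 -> R) c :
  Dmul eK (pushforward inl x) c =
  Dmul e1 x (coal_projG c) + (gdist e2 (coal_projH c) v0)%:R * \sum_t x t.
Proof.
rewrite Dmul_pushforward mulr_sumr -big_split; apply: eq_bigr => t _.
by rewrite gdist_coal natrD mulrDl mulrC.
Qed.

Lemma Dmul_coal_embH (y : T2 -> R) c :
  Dmul eK (pushforward coal_embH y) c =
  (gdist e1 (coal_projG c) u0)%:R * \sum_h y h + Dmul e2 y (coal_projH c).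
Proof.
rewrite Dmul_pushforward mulr_sumr -big_split; apply: eq_bigr => h _.
by rewrite gdist_coal coal_projG_embH coal_projH_embH natrD mulrDl mulrC.
Qed.

Lemma curvature_index_coal_Some (a b : R) :
  curvature_index e1 (Some a) -> curvature_index e2 (Some b) ->
  curvature_index eK (Some (a + b)).
Proof.
move=> [_ index1] [_ index2].
have [x [sum_x Dx]] := (index1 a).2 erefl.
have [y [sum_y Dy]] := (index2 b).2 erefl.
pose x' t := x t - dirac R u0 t.
have sum_x' : \sum_t x' t = 0 by rewrite sumrB sum_x sum_dirac subrr.
apply: (curvature_index_Some coal_rel_sym
          (z := fun c => pushforward inl x' c + pushforward coal_embH y c)).
  by rewrite big_split /= !sum_pushforward sum_x' sum_y add0r.
move=> c; rewrite Dmul_add Dmul_coal_inl Dmul_coal_embH Dmul_sub Dx Dy Dmul_dirac.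
by rewrite sum_x' sum_y mulr0 addr0 mulr1 addrA subrK.
Qed.

Lemma curvature_index_coal_None :
  curvature_index e1 (@None R) \/ curvature_index e2 (@None R) ->
  curvature_index eK (@None R).
Proof.
case=> [[[w Dw] sum0] | [[w Dw] sum0]]; have sum_w := sum0 w Dw.
- apply: (curvature_index_None coal_rel_sym (w := pushforward inl w));
    last by rewrite sum_pushforward.
  by move=> c; rewrite Dmul_coal_inl Dw sum_w mulr0 addr0.
- apply: (curvature_index_None coal_rel_sym (w := pushforward coal_embH w));
    last by rewrite sum_pushforward.
  by move=> c; rewrite Dmul_coal_embH Dw sum_w mulr0 add0r.
Qed.

End Coalescence.

Unset Implicit Arguments.

Theorem theorem3p5 (R : realFieldType) (T1 T2 : finType)
  (e1 : rel T1) (e2 : rel T2) (u0 : T1) (v0 : T2) :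
  simple_graph e1 -> simple_graph e2 ->
  connected_graph e1 -> connected_graph e2 ->
  (forall a b : R, curvature_index e1 (Some a) -> curvature_index e2 (Some b) ->
     curvature_index (coal_rel e1 e2 u0 v0) (Some (a + b)))
  /\ (curvature_index e1 (@None R) \/ curvature_index e2 (@None R) ->
     curvature_index (coal_rel e1 e2 u0 v0) (@None R)).
Proof.
move=> [e1_sym _] [e2_sym e2_irr] conn1 conn2; split.
- exact: curvature_index_coal_Some.
- exact: curvature_index_coal_None.
Qed.
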